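(* Let $m\ge2$ and $H\le G$, and let $W$ be an $R_mH$-module that is a direct sum of cyclic $R_mH$-submodules $W_k$, each of which is a free $R_m(H/S_k)$-module for some subgroup $S_k\le H$ (acting trivially on $W_k$). Then $W$ does not have property $\mathcal P(H)$.
   Context: $p$ is a prime, $G$ a cyclic group of order $p^n$, $R_m=\mathbb Z/p^m\mathbb Z$. Let $H\le G$ with generator $\tau$. For $m\ge2$, an $R_mH$-module $W$ has property $\mathcal P(H)$ if there exist an integer $s\ge0$ and elements $y,z\in W\setminus\big((\tau^{p^s}-1)W+pW\big)$ such that $(\tau^{p^s}-1)y=p^{m-1}z$. *)

From HB Require Import structures.
From mathcomp Require Import all_boot all_order all_algebra all_fingroup all_solvable.
Set Implicit Arguments. Unset Strict Implicit. Unset Printing Implicit Defensive.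
Import GRing.Theory.
Local Open Scope ring_scope.

Section Defs.
Variables (gT : finGroupType) (V : zmodType).

(* V with the action [act] of the group H is an R_m H-module, R_m = Z/p^m Z:
   p^m kills V, each h in H acts additively, and the action is a group action. *)
Definition is_RmH_module (p m : nat) (H : {group gT}) (act : gT -> V -> V) : Prop :=
  [/\ forall v : V, v *+ (p ^ m) = 0,
      forall g, g \in H -> forall u v : V, act g (u - v) = act g u - act g v,
      forall v : V, act 1%g v = v
    & forall g h, g \in H -> h \in H -> forall v : V, act (g * h)%g v = act g (act h v)].

(* An R_m H-submodule of V (R_m-scalars are integer multiples). *)
Definition is_submodule (H : {group gT}) (act : gT -> V -> V) (M : V -> Prop) : Prop :=
  [/\ M 0,
      forall u v, M u -> M v -> M (u - v)
    & forall g v, g \in H -> M v -> M (act g v)].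

Definition is_cyclic_submodule (H : {group gT}) (act : gT -> V -> V) (M : V -> Prop) : Prop :=
  exists w : V, forall v : V,
    M v <-> exists c : gT -> int, v = \sum_(g in H) act g w *~ c g.

Definition finite_sum_of (K : Type) (W : K -> V -> Prop) (P : K -> Prop) (v : V) : Prop :=
  exists (r : nat) (ks : 'I_r -> K) (ws : 'I_r -> V),
    (forall i, P (ks i) /\ W (ks i) (ws i)) /\ v = \sum_(i < r) ws i.

Definition is_direct_sum (H : {group gT}) (act : gT -> V -> V) (K : Type) (W : K -> V -> Prop) : Prop :=
  [/\ forall k, is_submodule H act (W k),
      forall v : V, finite_sum_of W (fun _ => True) v
    & forall k (v : V), W k v -> finite_sum_of W (fun k' => k' <> k) v -> v = 0].

(* M is a free R_m(H/S)-module, S acting trivially on M: it has a (finite) basis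
   b_1..b_r over the group ring R_m[H/S], i.e. every element of M is uniquely
   (coefficients in R_m = Z/p^m) a combination  sum_j sum_{C in H/S} c_{j,C} C.b_j,
   where the coset C acts through any representative. *)
Definition is_free_quot_module (p m : nat) (H S : {group gT}) (act : gT -> V -> V)
    (M : V -> Prop) : Prop :=
  (forall g v, g \in S -> M v -> act g v = v) /\
  exists (r : nat) (b : 'I_r -> V),
    [/\ forall j, M (b j),
        forall v, M v -> exists c : 'I_r -> {set gT} -> int,
          v = \sum_(j < r) \sum_(C in rcosets S H) act (repr C) (b j) *~ c j C
      & forall c : 'I_r -> {set gT} -> int,
          \sum_(j < r) \sum_(C in rcosets S H) act (repr C) (b j) *~ c j C = 0 ->
          forall j C, C \in rcosets S H -> ((p ^ m)%N%:Z %| c j C)%Z].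

Definition in_img_plus_p (p s : nat) (tau : gT) (act : gT -> V -> V) (x : V) : Prop :=
  exists u v : V, x = (act (tau ^+ (p ^ s))%g u - u) + v *+ p.

(* Property P(H), H generated by tau. *)
Definition propP (p m : nat) (tau : gT) (act : gT -> V -> V) : Prop :=
  exists (s : nat) (y z : V),
    [/\ ~ in_img_plus_p p s tau act y,
        ~ in_img_plus_p p s tau act z
      & act (tau ^+ (p ^ s))%g y - y = z *+ (p ^ (m - 1))].

End Defs.

(* Write t = tau^(p^s); since t lies in H and H is abelian, v |-> t.v is an
   additive endomorphism of W preserving every W_k.  Property P(H) asks for y, z
   with (t - 1) y = p^(m-1) z and z outside (t - 1) W + p W; we show that every
   such z lies in (t - 1) W + p W.
   - For one free R_m(H/S)-module M with basis b_j, write elements as integer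
     combinations of the translates C.b_j (C a coset of S in H).  Multiplication
     by t shifts the coefficients along C |-> C t^-1, so (t - 1) u = p^(m-1) w
     forces the coefficients of w to be, modulo p, the increments of a function
     along this shift (lemma [potential_increment], a purely combinatorial fact
     about integer functions whose increments along a permutation are divisible
     by q).  This gives w in (t - 1) M + p M ([free_module_relation]).
   - For the direct sum, decompose y and z along a common family of summands;
     directness splits the relation into one relation per summand
     ([direct_component_zero]), and the previous step applies to each of them
     ([componentwise_relation]). *)

From HB Require Import structures.
From mathcomp Require Import all_boot all_order all_algebra all_fingroup all_solvable.
From Stdlib Require Import ClassicalEpsilon.
Set Implicit Arguments. Unset Strict Implicit. Unset Printing Implicit Defensive.
Import GRing.Theory.
Local Open Scope ring_scope.

Definition additive_of (V : zmodType) (f : V -> V) (fB : zmod_morphism f) :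
  {additive V -> V} := HB.pack f (GRing.isZmodMorphism.Build V V f fB).

Definition in_diff_plus_p (V : zmodType) (p : nat) (f : V -> V) (x : V) : Prop :=
  exists u v : V, x = (f u - u) + v *+ p.

Lemma in_diff_plus_p0 (V : zmodType) (p : nat) (f : {additive V -> V}) :
  in_diff_plus_p p f 0.
Proof. by exists 0, 0; rewrite raddf0 subrr mul0rn addr0. Qed.

Lemma in_diff_plus_pD (V : zmodType) (p : nat) (f : {additive V -> V}) x y :
  in_diff_plus_p p f x -> in_diff_plus_p p f y -> in_diff_plus_p p f (x + y).
Proof.
move=> [u1 [v1 ->]] [u2 [v2 ->]]; exists (u1 + u2), (v1 + v2).
by rewrite raddfD mulrnDl opprD (addrACA (f u1 - u1)) (addrACA (f u1)).
Qed.

Section Potential.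
Variables (T : finType) (g : T -> T) (Q : {pred T}) (q : int) (a : T -> int).
Hypotheses (g_inj : injective g) (gQ : {in Q, forall x, g x \in Q})
  (q_dvd : {in Q, forall x, (q %| a (g x) - a x)%Z}).

Definition potential (x : T) : int := ((a x - a (fingraph.root (frel g) x)) %/ q)%Z.

Lemma orbit_root_step x : fingraph.root (frel g) (g x) = fingraph.root (frel g) x.
Proof.
apply/eqP; rewrite root_connect; last exact: fconnect_sym.
by rewrite fconnect_sym // fconnect1.
Qed.

Lemma iter_dvd n x : x \in Q -> iter n g x \in Q /\ (q %| a (iter n g x) - a x)%Z.
Proof.
elim: n => [|n IH] xQ /=; first by rewrite subrr dvdz0.
have [itQ itq] := IH xQ; split; first exact: gQ.
set y := iter n g x.
have -> : a (g y) - a x = (a (g y) - a y) + (a y - a x) by rewrite addrA subrK.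
by rewrite rpredD // q_dvd.
Qed.

Lemma potential_increment x : x \in Q ->
  a (g x) - a x = (potential (g x) - potential x) * q.
Proof.
have q_root y : y \in Q -> (q %| a y - a (fingraph.root (frel g) y))%Z.
  move=> yQ; rewrite -opprB rpredN -(iter_findex (connect_root _ y)).
  exact: (iter_dvd _ yQ).2.
move=> xQ; rewrite mulrBl !divzK ?q_root ?gQ // orbit_root_step.
by rewrite opprB addrA subrK.
Qed.

End Potential.

Section FreeQuotientModule.
Variables (gT : finGroupType) (V : zmodType) (p m : nat) (H S : {group gT})
  (act : gT -> V -> V) (M : V -> Prop) (t : gT) (r : nat) (b : 'I_r -> V).
Hypotheses (actB : forall g, g \in H -> zmod_morphism (act g))
  (actM : forall g h, g \in H -> h \in H -> forall v, act (g * h)%g v = act g (act h v))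
  (Mact : forall g v, g \in H -> M v -> M (act g v))
  (SH : S \subset H) (abH : abelian H) (tH : t \in H)
  (trivS : forall g v, g \in S -> M v -> act g v = v)
  (bM : forall j, M (b j))
  (span : forall v, M v -> exists c, v = \sum_(j < r) \sum_(C in rcosets S H)
                                           act (repr C) (b j) *~ c j C)
  (unique : forall c, \sum_(j < r) \sum_(C in rcosets S H) act (repr C) (b j) *~ c j C = 0 ->
              forall j C, C \in rcosets S H -> ((p ^ m)%N%:Z %| c j C)%Z).

Local Notation Q := (rcosets S H).
Let ft : {additive V -> V} := additive_of (actB tH).

Definition combination (c : 'I_r -> {set gT} -> int) : V :=
  \sum_(j < r) \sum_(C in Q) act (repr C) (b j) *~ c j C.

Lemma combinationB c c' :
  combination (fun j C => c j C - c' j C) = combination c - combination c'.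
Proof.
rewrite /combination -sumrB; apply: eq_bigr => j _; rewrite -sumrB.
by apply: eq_bigr => C _; rewrite mulrzBr.
Qed.

Lemma combinationD c c' :
  combination (fun j C => c j C + c' j C) = combination c + combination c'.
Proof.
rewrite /combination -big_split; apply: eq_bigr => j _; rewrite -big_split.
by apply: eq_bigr => C _; rewrite mulrzDr.
Qed.

Lemma combinationMn c (n : nat) :
  combination (fun j C => c j C * n%:Z) = combination c *+ n.
Proof.
rewrite /combination -sumrMnl; apply: eq_bigr => j _; rewrite -sumrMnl.
by apply: eq_bigr => C _; rewrite mulrzA pmulrn.
Qed.

Lemma combination_unique c c' : combination c = combination c' ->
  forall j C, C \in Q -> ((p ^ m)%N%:Z %| c j C - c' j C)%Z.
Proof. by move=> e; apply: unique; rewrite -/(combination _) combinationB e subrr. Qed.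

Lemma repr_rcoset C : C \in Q -> repr C \in H.
Proof.
case/rcosetsP => y yH ->; case/rcosetP: (mem_repr_rcoset S y) => s sS ->.
by rewrite groupM // (subsetP SH).
Qed.

Lemma rcoset_shift C x : C \in Q -> x \in H -> (C :* x)%g \in Q.
Proof.
case/rcosetsP => y yH -> xH; rewrite -rcosetM; apply/rcosetsP.
by exists (y * x)%g; rewrite ?groupM.
Qed.

Lemma act_rcoset x y v : x \in H -> y \in H -> (S :* x = S :* y)%g -> M v ->
  act x v = act y v.
Proof.
move=> xH yH Sxy Mv; have : x \in (S :* y)%g by rewrite -Sxy rcoset_refl.
case/rcosetP => s sS ->; rewrite actM //; last exact: (subsetP SH).
by rewrite trivS //; apply: Mact.
Qed.

Lemma act_translate C j : C \in Q ->
  act t (act (repr C) (b j)) = act (repr (C :* t)%g) (b j).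
Proof.
move=> CQ; have rH := repr_rcoset CQ.
rewrite -actM //; apply: act_rcoset; rewrite ?groupM ?repr_rcoset ?rcoset_shift //.
case/rcosetsP: CQ rH => y yH -> rH.
rewrite (centsP abH) // rcosetM rcoset_repr -!rcosetM.
by rewrite rcoset_repr.
Qed.

(* The shift of cosets C |-> C t^-1, along which t moves coordinates. *)
Definition shift (C : {set gT}) : {set gT} := (C :* t^-1)%g.

Lemma shiftK C : (shift C :* t)%g = C.
Proof. by rewrite /shift -rcosetM mulVg rcoset1. Qed.

Lemma shift_inj : injective shift.
Proof. exact: (can_inj (g := fun C => (C :* t)%g) shiftK). Qed.

Lemma shiftQ C : (shift C \in Q) = (C \in Q).
Proof.
apply/idP/idP => CQ; last by rewrite rcoset_shift ?groupV.
by rewrite -(shiftK C) rcoset_shift.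
Qed.

Lemma combination_diff c :
  ft (combination c) - combination c = combination (fun j C => c j (shift C) - c j C).
Proof.
rewrite combinationB; congr (_ - _); rewrite raddf_sum; apply: eq_bigr => j _.
rewrite raddf_sum (reindex_inj shift_inj); apply: eq_big => C; first by rewrite shiftQ.
by move=> CQ; rewrite raddfMz /= act_translate // shiftK.
Qed.

Lemma free_module_relation u w : (0 < p)%N -> (0 < m)%N -> M u -> M w ->
  ft u - u = w *+ (p ^ (m - 1)) -> in_diff_plus_p p ft w.
Proof.
move=> p_gt0 m_gt0 /span[a ->] /span[c ->]; rewrite -!/(combination _) => rel.
set P1 := (p ^ (m - 1))%N.
have pm : (p ^ m)%N%:Z = P1%:Z * p%:Z by rewrite -PoszM -expnSr subn1 prednK.
have P1_neq0 : P1%:Z != 0 by rewrite eqz_nat -lt0n expn_gt0 p_gt0.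
(* Comparing coordinates in (t - 1) u = p^(m-1) w, modulo p^m. *)
have coef j C : C \in Q ->
    ((p ^ m)%N%:Z %| (a j (shift C) - a j C) - c j C * P1%:Z)%Z.
  apply: (combination_unique (c := fun j C => a j (shift C) - a j C)
                             (c' := fun j C => c j C * P1%:Z)).
  by rewrite -combination_diff combinationMn.
have P1_dvd j : {in Q, forall C, (P1%:Z %| a j (shift C) - a j C)%Z}.
  move=> C CQ; rewrite -[_ - _](subrK (c j C * P1%:Z)) rpredD ?dvdz_mull //.
  by apply: dvdz_trans (coef j C CQ); rewrite pm dvdz_mulr.
(* Hence the increments of the coordinates a_j of u are P1 times those of d_j. *)
pose d j := potential shift P1%:Z (a j).
have incr j : {in Q, forall C, a j (shift C) - a j C = (d j (shift C) - d j C) * P1%:Z}.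
  by apply: potential_increment (P1_dvd j); [exact: shift_inj | move=> D; rewrite shiftQ].
have p_dvd j C : C \in Q -> (p%:Z %| c j C - (d j (shift C) - d j C))%Z.
  move=> CQ; rewrite -(dvdz_mul2r P1_neq0) mulrBl -incr // (mulrC p%:Z) -pm.
  by rewrite -opprB rpredN coef.
(* So c = (increments of d) + p e, i.e. w = (t - 1) (combination d) + p (combination e). *)
exists (combination d), (combination (fun j C => (c j C - (d j (shift C) - d j C)) %/ p%:Z)%Z).
rewrite combination_diff -combinationMn -combinationD /combination.
apply: eq_bigr => j _; apply: eq_bigr => C CQ.
by rewrite divzK ?p_dvd // addrC subrK.
Qed.

End FreeQuotientModule.

Section DirectSum.
Variables (V : zmodType) (K : Type) (W : K -> V -> Prop) (f : {additive V -> V})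
  (p P1 : nat).
Hypotheses (W0 : forall k, W k 0)
  (WB : forall k u v, W k u -> W k v -> W k (u - v))
  (Wf : forall k v, W k v -> W k (f v))
  (Wdirect : forall k v, W k v -> finite_sum_of W (fun k' => k' <> k) v -> v = 0).

Lemma WD k u v : W k u -> W k v -> W k (u + v).
Proof. by move=> Wu Wv; rewrite -[v]opprK -[- v]sub0r; apply: WB => //; apply: WB. Qed.

Lemma WMn k v n : W k v -> W k (v *+ n).
Proof. by move=> Wv; elim: n => [|n IH]; [rewrite mulr0n | rewrite mulrS; apply: WD]. Qed.

Lemma W_sum k (I : finType) (P : pred I) (xs : I -> V) :
  (forall i, P i -> W k (xs i)) -> W k (\sum_(i | P i) xs i).
Proof. exact: (big_ind (W k) (W0 k) (@WD k)). Qed.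

Definition same_index (k k' : K) : bool :=
  if excluded_middle_informative (k' = k) then true else false.

Lemma same_indexP k k' : reflect (k' = k) (same_index k k').
Proof. by rewrite /same_index; case: excluded_middle_informative => e; constructor. Qed.

Lemma direct_component_zero (I : finType) (ks : I -> K) (xs : I -> V) (P : pred I) k :
  (forall i, W (ks i) (xs i)) -> \sum_(i | P i) xs i = 0 ->
  \sum_(i | P i && same_index k (ks i)) xs i = 0.
Proof.
move=> Wxs; rewrite (bigID (fun i => same_index k (ks i))) /= => /eqP.
rewrite addr_eq0 => /eqP sum_k; apply: (Wdirect (k := k)).
  by apply: W_sum => i /andP[_ /same_indexP <-].
pose others : pred I := fun i => P i && ~~ same_index k (ks i).
rewrite sum_k -sumrN -[\sum_(i | _) _]/(\sum_(i in others) - xs i) big_enum_val.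
exists _, (fun j => ks (enum_val (A := others) j)), (fun j => - xs (enum_val j)); split=> // j.
have /andP[_ /same_indexP k_neq] := enum_valP j.
by split=> //; rewrite -sub0r; apply: WB.
Qed.

Lemma common_decomposition y z :
  finite_sum_of W (fun _ => True) y -> finite_sum_of W (fun _ => True) z ->
  exists (I : finType) (ks : I -> K) (ys zs : I -> V),
    [/\ forall i, W (ks i) (ys i) /\ W (ks i) (zs i), y = \sum_i ys i & z = \sum_i zs i].
Proof.
move=> [ry [ky [yv [Wy ->]]]] [rz [kz [zv [Wz ->]]]].
exists ('I_ry + 'I_rz)%type, (fun i => match i with inl j => ky j | inr j => kz j end),
  (fun i => if i is inl j then yv j else 0), (fun i => if i is inr j then zv j else 0).
split; first by case=> j; [case: (Wy j) | case: (Wz j)].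
  by rewrite big_sumType /= big1_eq addr0.
by rewrite big_sumType /= big1_eq add0r.
Qed.

Hypothesis component_relation : forall k u w, W k u -> W k w ->
  f u - u = w *+ P1 -> in_diff_plus_p p f w.

Lemma componentwise_relation (I : finType) (ks : I -> K) (ys zs : I -> V) (P : pred I) :
  (forall i, W (ks i) (ys i) /\ W (ks i) (zs i)) ->
  \sum_(i | P i) (f (ys i) - ys i - zs i *+ P1) = 0 ->
  in_diff_plus_p p f (\sum_(i | P i) zs i).
Proof.
move=> Wyz; have [n] := ubnP #|P|; elim: n P => // n IH P.
case: (pickP P) => [i0 Pi0 | P0] card_P rel; last first.
  by rewrite big_pred0 //; apply: in_diff_plus_p0.
pose k0 := ks i0; pose same i := same_index k0 (ks i).
have Wrel i : W (ks i) (f (ys i) - ys i - zs i *+ P1).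
  have [Wy Wz] := Wyz i; apply: WB; first by apply: WB => //; apply: Wf.
  exact: WMn.
have rel_k0 := direct_component_zero k0 Wrel rel.
rewrite (bigID same) /=; apply: in_diff_plus_pD.
  apply: (component_relation (k := k0) (u := \sum_(i | P i && same i) ys i)).
  - by apply: W_sum => i /andP[_ /same_indexP <-]; case: (Wyz i).
  - by apply: W_sum => i /andP[_ /same_indexP <-]; case: (Wyz i).
  apply/eqP; rewrite -subr_eq0.
  by rewrite raddf_sum -sumrMnl -!sumrB rel_k0.
apply: IH.
  rewrite -ltnS (leq_trans _ card_P) // ltnS; apply: proper_card.
  apply/properP; split; first by apply/subsetP => i /andP[].
  by exists i0; rewrite // unfold_in /= Pi0 /same; case: same_indexP.
by move: rel; rewrite (bigID same) /= rel_k0 add0r.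
Qed.

End DirectSum.

Theorem corollary4p3 (p n m : nat) (gT : finGroupType) (G H : {group gT}) (tau : gT)
    (V : zmodType) (act : gT -> V -> V) (K : Type) (W : K -> V -> Prop)
    (S : K -> {group gT}) :
  prime p -> cyclic G -> #|G| = (p ^ n)%N -> H \subset G ->
  (H : {set gT}) = <[tau]>%g -> (2 <= m)%N ->
  is_RmH_module p m H act ->
  is_direct_sum H act W ->
  (forall k, [/\ is_cyclic_submodule H act (W k), S k \subset H
                & is_free_quot_module p m H (S k) act (W k)]) ->
  ~ propP p m tau act.
Proof.
move=> p_prime _ _ _ Htau m_ge2 [_ actB _ actM] [Wsub Wspan Wdirect] Wfree.
move=> [s [y [z [_ z_notin rel]]]]; apply: z_notin.
pose t := (tau ^+ (p ^ s))%g.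
have tH : t \in H by rewrite Htau mem_cycle.
have abH : abelian H by rewrite Htau cycle_abelian.
have component k u w : W k u -> W k w ->
    act t u - u = w *+ (p ^ (m - 1)) -> in_diff_plus_p p (additive_of (actB t tH)) w.
  have [_ SH [trivS [r [b [bM span unique]]]]] := Wfree k; have [_ _ Mact] := Wsub k.
  apply: (@free_module_relation gT V p m H (S k) act (W k) t r b actB actM Mact SH abH tH
                                 trivS bM span unique); [exact: prime_gt0 | exact: ltnW].
have W0 k : W k 0 by case: (Wsub k).
have WB k : forall u v, W k u -> W k v -> W k (u - v) by case: (Wsub k).
have Wt k v : W k v -> W k (act t v) by case: (Wsub k) => _ _ Wact; apply: Wact.
have [I [ks [ys [zs [Wyz y_sum z_sum]]]]] := common_decomposition W0 (Wspan y) (Wspan z).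
rewrite z_sum; apply: (componentwise_relation (f := additive_of (actB t tH)) W0 WB Wt
                         Wdirect component Wyz (P := xpredT)).
by rewrite !sumrB sumrMnl -raddf_sum -y_sum -z_sum /= rel subrr.
Qed.
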